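(* Let $x,y,z$ be real numbers with $x\ge 2$ such that $\Psi(x+z,y)-\Psi(x,y)>\pi(y)$. Then $g(\lfloor x\rfloor)<z$.
   Context: $\pi(y)$ is the number of primes $\le y$. For real $x,y$, $\Psi(x,y)$ denotes the number of positive integers $\le x$ all of whose prime factors are $\le y$. For integers $n>1$ and $k\ge 1$, say that $(n,k)$ has a prime representation if there are distinct primes $P_1,\dots,P_k$ with $P_j\mid (n+j)$ for $1\le j\le k$; $g(n)$ is the largest positive integer $k$ such that $(n,k)$ has a prime representation. *)

From mathcomp Require Import all_boot.
From Stdlib Require Import Reals ClassicalEpsilon.

Set Implicit Arguments.
Unset Strict Implicit.
Unset Printing Implicit Defensive.

Definition Rleb (r1 r2 : R) : bool := if Rle_dec r1 r2 then true else false.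

(* floor of a real, truncated at 0 (as a nat); for r >= 0 this is the usual floor *)
Definition floorN (r : R) : nat := Z.to_nat (Int_part r).

Definition smooth (y : R) (m : nat) : bool := all (fun p => Rleb (INR p) y) (primes m).

Definition Psi (x y : R) : nat := count (smooth y) (iota 1 (floorN x)).

Definition primepi (y : R) : nat := count prime (iota 1 (floorN y)).

Definition has_prime_rep (n k : nat) : Prop :=
  (1 <= k)%N /\
  exists P : nat -> nat,
    (forall j, (1 <= j <= k)%N -> prime (P j) /\ (P j %| n + j)%N) /\
    (forall i j, (1 <= i <= k)%N -> (1 <= j <= k)%N -> P i = P j -> i = j).

(* g(n) = the largest positive integer k such that (n,k) has a prime representation
   (chosen by Hilbert's epsilon; this is that largest k whenever it exists). *)
Definition is_g (n k : nat) : Prop :=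
  has_prime_rep n k /\ forall k', has_prime_rep n k' -> (k' <= k)%N.

Definition g (n : nat) : nat := epsilon (inhabits 0%N) (is_g n).

(* If z >= g(n) with n = floor x and P_1, ..., P_g a prime representation of
   (n, g(n)), then every integer of (x, x + z] is n + j with 1 <= j <= g(n).
   Such an integer that is y-smooth has its prime factor P_j <= y, and the P_j
   are distinct, so there are at most pi(y) of them. *)

From mathcomp Require Import all_boot.
From Stdlib Require Import Reals ClassicalEpsilon Lra Lia.
From mathcomp Require Import zify.

Set Implicit Arguments.
Unset Strict Implicit.
Unset Printing Implicit Defensive.

Lemma floorN_ge (r : R) (m : nat) : (INR m <= r)%R -> (m <= floorN r)%N.
Proof.
move=> le_mr; rewrite /floorN.
have [_ Int_part_gt] := base_Int_part r.
rewrite INR_IZR_INZ in le_mr.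
have : (Z.of_nat m - 1 < Int_part r)%Z by apply: lt_IZR; rewrite minus_IZR; lra.
lia.
Qed.

Lemma floorN_lt (r : R) (m : nat) : (0 < m)%N -> (r < INR m)%R -> (floorN r < m)%N.
Proof.
move=> m_gt0 lt_rm; rewrite /floorN.
have [Int_part_le _] := base_Int_part r.
rewrite INR_IZR_INZ in lt_rm.
have : (Int_part r < Z.of_nat m)%Z by apply: lt_IZR; lra.
lia.
Qed.

Lemma floorN_add1_gt (r : R) : (0 <= r)%R -> (r < INR (floorN r) + 1)%R.
Proof.
move=> r_ge0; rewrite /floorN.
have [_ Int_part_gt] := base_Int_part r.
have : (-1 < Int_part r)%Z by apply: lt_IZR; lra.
move=> Int_part_ge0; rewrite INR_IZR_INZ Znat.Z2Nat.id; [lra | lia].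
Qed.

(* [p |-> (p - 1) / 2] is injective on primes and sends those below [N] into
   [0, (N - 1) / 2]. *)
Lemma size_uniq_primes_le (s : seq nat) (N : nat) :
  uniq s -> all prime s -> all (leq^~ N) s -> (size s <= N.+1./2)%N.
Proof.
move=> s_uniq /allP s_prime /allP s_le.
pose f p := (p.-1)./2.
have f_inj : {in s &, injective f}.
  move=> p q /s_prime p_pr /s_prime q_pr; rewrite /f.
  have := odd_double_half p; have := odd_double_half q.
  have := prime_gt1 p_pr; have := prime_gt1 q_pr.
  case: (boolP (odd p)) => [p_odd | /(prime_oddPn p_pr) ->];
  case: (boolP (odd q)) => [q_odd | /(prime_oddPn q_pr) ->] //=.
  - lia.
  - have := odd_prime_gt2 p_odd p_pr; lia.
  - have := odd_prime_gt2 q_odd q_pr; lia.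
have f_range : {subset map f s <= iota 0 N.+1./2}.
  move=> v /mapP [p /[dup] /s_le p_le /s_prime p_pr ->]; rewrite mem_iota /f /=.
  have := prime_gt1 p_pr; have := odd_double_half p.-1; have := odd_double_half N.+1.
  case: (odd _); case: (odd _) => /=; lia.
have := uniq_leq_size _ f_range; rewrite map_inj_in_uniq // size_map size_iota.
exact.
Qed.

Lemma prime_rep_le n k : has_prime_rep n k -> (k <= n.+1)%N.
Proof.
case=> k_gt0 [P [P_pr P_inj]].
have Ps_uniq : uniq (map P (iota 1 k)).
  rewrite map_inj_in_uniq ?iota_uniq // => i j.
  rewrite !mem_iota => i_in j_in; apply: P_inj; lia.
have Ps_prime : all prime (map P (iota 1 k)).
  apply/allP => q /mapP [j]; rewrite mem_iota => j_in ->.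
  by case: (P_pr j); first lia.
have Ps_le : all (leq^~ (n + k)) (map P (iota 1 k)).
  apply/allP => q /mapP [j]; rewrite mem_iota => j_in ->.
  case: (P_pr j) => [|_ /dvdn_leq le_P]; first lia.
  by have := le_P ltac:(lia); lia.
have := size_uniq_primes_le Ps_uniq Ps_prime Ps_le.
rewrite size_map size_iota; have := odd_double_half (n + k).+1; case: odd => /=; lia.
Qed.

Lemma prime_rep1 n : (0 < n)%N -> has_prime_rep n 1.
Proof.
move=> n_gt0; split => //; exists (fun _ => pdiv (n + 1)); split => [j j1|i j i1 j1 _].
- by rewrite (_ : j = 1%N); [rewrite pdiv_prime ?pdiv_dvd; lia | lia].
- lia.
Qed.

Lemma gP n : (0 < n)%N -> is_g n (g n).
Proof.
move=> n_gt0; apply: epsilon_spec.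
pose repb k := if excluded_middle_informative (has_prime_rep n k) then true else false.
have repbP k : repb k <-> has_prime_rep n k.
  by rewrite /repb; case: excluded_middle_informative.
have rep_ex : exists k, repb k by exists 1%N; apply/repbP; exact: prime_rep1.
have rep_bound k : repb k -> (k <= n.+1)%N by move/repbP; exact: prime_rep_le.
case: (ex_maxnP rep_ex rep_bound) => m /repbP m_rep m_max.
by exists m; split => // k /repbP; exact: m_max.
Qed.

Lemma uniq_primes_le_primepi (s : seq nat) (y : R) :
  uniq s -> (forall p, p \in s -> prime p /\ (INR p <= y)%R) ->
  (size s <= primepi y)%N.
Proof.
move=> s_uniq s_small; rewrite /primepi -size_filter; apply: uniq_leq_size => // p.
case/s_small => p_pr /floorN_ge le_p_floor.
by rewrite mem_filter p_pr mem_iota prime_gt0 // add1n ltnS.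
Qed.

Lemma smooth_prime_dvd_le (y : R) m p :
  (0 < m)%N -> smooth y m -> prime p -> (p %| m)%N -> (INR p <= y)%R.
Proof.
move=> m_gt0 /allP m_smooth p_pr p_dvd.
have : p \in primes m by rewrite mem_primes p_pr m_gt0.
by move/m_smooth; rewrite /Rleb; case: Rle_dec.
Qed.

Lemma count_smooth_prime_rep (y : R) n k c :
  has_prime_rep n k -> (c <= k)%N ->
  (count (smooth y) (iota n.+1 c) <= primepi y)%N.
Proof.
case=> _ [P [P_pr P_inj]] le_ck.
rewrite -size_filter -(size_map (fun m => P (m - n)%N)).
apply: uniq_primes_le_primepi.
  rewrite map_inj_in_uniq ?filter_uniq ?iota_uniq // => i j.
  rewrite !mem_filter !mem_iota => /andP [_ i_in] /andP [_ j_in] eq_P.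
  suff: (i - n = j - n)%N by lia.
  apply: P_inj eq_P; lia.
move=> p /mapP [m]; rewrite mem_filter mem_iota => /andP [m_smooth m_in] ->.
have [|Pm_pr Pm_dvd] := P_pr (m - n)%N; first lia.
split=> //; apply: smooth_prime_dvd_le m_smooth Pm_pr _; first lia.
by rewrite (_ : n + (m - n) = m)%N in Pm_dvd; last lia.
Qed.

Lemma count_iota_le_split (a : pred nat) b n c : (b <= n + c)%N ->
  (count a (iota 1 b) <= count a (iota 1 n) + count a (iota n.+1 c))%N.
Proof.
move=> le_b; rewrite -count_cat -[n.+1]add1n -iotaD -(subnKC le_b) iotaD count_cat.
exact: leq_addr.
Qed.

Theorem lemma2p4 (x y z : R) :
  (2 <= x)%R ->
  (INR (Psi (x + z) y) - INR (Psi x y) > INR (primepi y))%R ->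
  (INR (g (floorN x)) < z)%R.
Proof.
move=> x_ge2 Psi_gap; apply: Rnot_le_lt => z_le.
set n := floorN x; set k := g n in z_le.
have n_gt0 : (0 < n)%N by apply: floorN_ge; simpl; lra.
have [k_rep _] := gP n_gt0.
have floor_xz_le : (floorN (x + z) <= n + k)%N.
  suff: (floorN (x + z) < n + k + 1)%N by lia.
  apply: floorN_lt; first lia.
  rewrite !plus_INR /=; have := @floorN_add1_gt x; rewrite -/n; lra.
have : (Psi (x + z) y <= Psi x y + primepi y)%N.
  apply: leq_trans (count_iota_le_split _ floor_xz_le) _.
  by rewrite leq_add2l (count_smooth_prime_rep _ k_rep).
by move/leP/le_INR; rewrite plus_INR; lra.
Qed.
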